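(* Let $f\colon\tilde M\to\mathbb H$ be a minimal surface with conjugate $f^*$, and let $\gamma\in\pi_1(M)$ act with $\gamma^*f=f+\tau$, $\gamma^*f^*=f^*+\tau^*$, where $\tau=(\tau_0,\tau_1,\tau_2,\tau_3)$, $\tau^*=(\tau_0^*,\tau_1^*,\tau_2^*,\tau_3^* )\in\mathbb R^4$. Let $\mu\in\mathbb C\setminus\{0,1\}$, $s=-\ln|\mu|$, $t\in\mathbb R$ with $e^{s+it}=\frac{\bar\mu-1}{\bar\mu(1-\mu)}$. Then the simple factor dressing $f^\mu$ with parameter $\mu$ satisfies $\gamma^*f^\mu=f^\mu+\tau^\mu$ with $$\tau^\mu=\begin{pmatrix}\tau_0\\ \tau_1\\ \cos t\,(\tau_2\cosh s-\tau_3^*\sinh s)-\sin t\,(\tau_3\cosh s+\tau_2^*\sinh s)\\ \sin t\,(\tau_2\cosh s-\tau_3^*\sinh s)+\cos t\,(\tau_3\cosh s+\tau_2^*\sinh s)\end{pmatrix}.$$ In particular $\gamma^*f^\mu=f^\mu$ if and only if $\tau_0=\tau_1=0$ and $(\tau_2,\tau_3)=(\tau_3^*,-\tau_2^* )\tanh s$.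
   Context: Quaternions $\mathbb H=\mathbb R^4$ with basis $1,i,j,k$, $\mathbb C=\operatorname{span}_{\mathbb R}\{1,i\}$. Conjugate surface: $df^*=-*df$. Simple factor dressing with parameter $\mu$: with $a=\frac{\mu+\mu^{-1}}2$, $b=i\frac{\mu^{-1}-\mu}2$, $f^\mu=-f\frac{a-1}2+f^*\frac b2-\frac{b}{a-1}\big(f\frac b2+f^*\frac{a-1}2\big)$. *)

From Stdlib Require Export Reals.
Open Scope R_scope.

(* Quaternions H = R^4 with basis 1,i,j,k. *)
Record H := mkH { q0 : R; q1 : R; q2 : R; q3 : R }.

Definition Hadd (p q : H) : H :=
  mkH (q0 p + q0 q) (q1 p + q1 q) (q2 p + q2 q) (q3 p + q3 q).
Definition Hopp (p : H) : H := mkH (- q0 p) (- q1 p) (- q2 p) (- q3 p).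
Definition Hsub (p q : H) : H := Hadd p (Hopp q).
(* Hamilton product: i^2=j^2=k^2=ijk=-1 *)
Definition Hmul (p q : H) : H :=
  mkH (q0 p * q0 q - q1 p * q1 q - q2 p * q2 q - q3 p * q3 q)
      (q0 p * q1 q + q1 p * q0 q + q2 p * q3 q - q3 p * q2 q)
      (q0 p * q2 q - q1 p * q3 q + q2 p * q0 q + q3 p * q1 q)
      (q0 p * q3 q + q1 p * q2 q - q2 p * q1 q + q3 p * q0 q).
Definition Hconj (p : H) : H := mkH (q0 p) (- q1 p) (- q2 p) (- q3 p).
Definition Hnorm2 (p : H) : R := q0 p ^ 2 + q1 p ^ 2 + q2 p ^ 2 + q3 p ^ 2.
Definition Hinv (p : H) : H :=
  let n := Hnorm2 p in
  mkH (q0 p / n) (- q1 p / n) (- q2 p / n) (- q3 p / n).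
Definition Hdiv (p q : H) : H := Hmul p (Hinv q).

Definition Hreal (r : R) : H := mkH r 0 0 0.
Definition Hcplx (x y : R) : H := mkH x y 0 0.
Definition H1 : H := Hreal 1.
Definition Hi : H := Hcplx 0 1.
Definition Hhalf : H := Hreal (/ 2).

Definition dress_a (mu : H) : H := Hmul (Hadd mu (Hinv mu)) Hhalf.
Definition dress_b (mu : H) : H := Hmul Hi (Hmul (Hsub (Hinv mu) mu) Hhalf).

Definition dress (mu f fs : H) : H :=
  let a := dress_a mu in
  let b := dress_b mu in
  let am1 := Hsub a H1 in
  Hsub (Hadd (Hopp (Hmul f (Hmul am1 Hhalf))) (Hmul fs (Hmul b Hhalf)))
       (Hmul (Hdiv b am1)
             (Hadd (Hmul f (Hmul b Hhalf)) (Hmul fs (Hmul am1 Hhalf)))).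

From Stdlib Require Import Lra.

(* For complex mu the coefficients a, b and b/(a-1) are complex numbers, and
   the dressing is additive in f and f^*. A direct computation shows that it
   fixes the 1- and i-components of f and sends the (j,k)-components to the
   complex product w (u + i v), where w = (conj mu - 1)/(conj mu (1 - mu)) =
   e^(s+it), u = c f_2 - d f^*_3, v = c f_3 + d f^*_2 and c, d = (1 +- |mu|^2)/2.
   As e^(-s) = |mu|, we get e^s c = cosh s and e^s d = sinh s, so tau^mu is
   tau_0 + tau_1 i plus the rotation by t of
   (tau_2 cosh s - tau^*_3 sinh s, tau_3 cosh s + tau^*_2 sinh s), which vanishes
   iff both of these coordinates do. *)

Lemma Hadd_mkH a b c d e f g h :
  Hadd (mkH a b c d) (mkH e f g h) = mkH (a + e) (b + f) (c + g) (d + h).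
Proof. reflexivity. Qed.

Lemma Hopp_mkH a b c d : Hopp (mkH a b c d) = mkH (- a) (- b) (- c) (- d).
Proof. reflexivity. Qed.

Lemma Hsub_mkH a b c d e f g h :
  Hsub (mkH a b c d) (mkH e f g h) = mkH (a + - e) (b + - f) (c + - g) (d + - h).
Proof. reflexivity. Qed.

Lemma Hmul_mkH a b c d e f g h :
  Hmul (mkH a b c d) (mkH e f g h) =
  mkH (a * e - b * f - c * g - d * h) (a * f + b * e + c * h - d * g)
      (a * g - b * h + c * e + d * f) (a * h + b * g - c * f + d * e).
Proof. reflexivity. Qed.

Lemma mkH_eq a b c d a' b' c' d' :
  a = a' -> b = b' -> c = c' -> d = d' -> mkH a b c d = mkH a' b' c' d'.
Proof. intros -> -> -> ->; reflexivity. Qed.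

Ltac Hsimpl :=
  repeat rewrite ?Hadd_mkH, ?Hopp_mkH, ?Hsub_mkH, ?Hmul_mkH.

Lemma Hadd_cplx a b c d : Hadd (Hcplx a b) (Hcplx c d) = Hcplx (a + c) (b + d).
Proof. unfold Hcplx; Hsimpl; apply mkH_eq; ring. Qed.

Lemma Hsub_cplx a b c d : Hsub (Hcplx a b) (Hcplx c d) = Hcplx (a - c) (b - d).
Proof. unfold Hcplx; Hsimpl; apply mkH_eq; ring. Qed.

Lemma Hmul_cplx a b c d :
  Hmul (Hcplx a b) (Hcplx c d) = Hcplx (a * c - b * d) (a * d + b * c).
Proof. unfold Hcplx; Hsimpl; apply mkH_eq; ring. Qed.

Lemma Hconj_cplx a b : Hconj (Hcplx a b) = Hcplx a (- b).
Proof. unfold Hconj, Hcplx; cbn; apply mkH_eq; ring. Qed.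

Lemma Hinv_cplx a b :
  Hinv (Hcplx a b) = Hcplx (a / (a ^ 2 + b ^ 2)) (- b / (a ^ 2 + b ^ 2)).
Proof.
  unfold Hinv, Hnorm2, Hcplx; cbn [q0 q1 q2 q3].
  replace (a ^ 2 + b ^ 2 + 0 ^ 2 + 0 ^ 2) with (a ^ 2 + b ^ 2) by ring.
  apply mkH_eq; unfold Rdiv; ring.
Qed.

Lemma Hdiv_cplx a b c d :
  Hdiv (Hcplx a b) (Hcplx c d) =
  Hcplx ((a * c + b * d) / (c ^ 2 + d ^ 2)) ((b * c - a * d) / (c ^ 2 + d ^ 2)).
Proof.
  unfold Hdiv; rewrite Hinv_cplx, Hmul_cplx; f_equal; unfold Rdiv; ring.
Qed.

Lemma cplx_H1 : H1 = Hcplx 1 0. Proof. reflexivity. Qed.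
Lemma cplx_Hi : Hi = Hcplx 0 1. Proof. reflexivity. Qed.
Lemma cplx_Hhalf : Hhalf = Hcplx (/ 2) 0. Proof. reflexivity. Qed.

Ltac Csimpl :=
  rewrite ?cplx_H1, ?cplx_Hi, ?cplx_Hhalf;
  repeat rewrite ?Hadd_cplx, ?Hsub_cplx, ?Hmul_cplx, ?Hconj_cplx, ?Hinv_cplx,
                 ?Hdiv_cplx.

Lemma sum_sq_neq0 x y : (x, y) <> (0, 0) -> x ^ 2 + y ^ 2 <> 0.
Proof.
  intros Hxy E; apply Hxy.
  assert (x = 0 /\ y = 0) as [-> ->] by nra; reflexivity.
Qed.

Lemma sum_sq_gt0 x y : (x, y) <> (0, 0) -> 0 < x ^ 2 + y ^ 2.
Proof.
  intro Hxy; pose proof (sum_sq_neq0 x y Hxy); nra.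
Qed.

Lemma dress_add mu f fs g gs :
  dress mu (Hadd f g) (Hadd fs gs) = Hadd (dress mu f fs) (dress mu g gs).
Proof.
  unfold dress; cbv zeta.
  generalize (dress_a mu) (dress_b mu); intros [a0 a1 a2 a3] [b0 b1 b2 b3].
  rewrite cplx_H1; unfold Hcplx, Hhalf, Hreal; Hsimpl.
  match goal with |- context [Hdiv ?b ?a] => destruct (Hdiv b a) as [k0 k1 k2 k3] end.
  destruct f, fs, g, gs; Hsimpl; apply mkH_eq; ring.
Qed.

Section ComplexParameter.

Variables mr mi : R.
Hypothesis mu_neq0 : (mr, mi) <> (0, 0).
Hypothesis mu_neq1 : (mr, mi) <> (1, 0).

Let n := mr ^ 2 + mi ^ 2.
Let m := (1 - mr) ^ 2 + mi ^ 2.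

Lemma mu_norm2_neq0 : n <> 0.
Proof. exact (sum_sq_neq0 mr mi mu_neq0). Qed.

Lemma one_sub_mu_norm2_neq0 : m <> 0.
Proof.
  apply sum_sq_neq0; intro E; injection E; intros; apply mu_neq1; f_equal; lra.
Qed.

Lemma dress_a_sub1_cplx :
  Hsub (dress_a (Hcplx mr mi)) H1 = Hcplx ((mr + mr / n) / 2 - 1) ((mi - mi / n) / 2).
Proof.
  pose proof mu_norm2_neq0; unfold dress_a; Csimpl; fold n; f_equal; field; auto.
Qed.

Lemma dress_b_cplx :
  dress_b (Hcplx mr mi) = Hcplx ((mi / n + mi) / 2) ((mr / n - mr) / 2).
Proof.
  pose proof mu_norm2_neq0; unfold dress_b; Csimpl; fold n; f_equal; field; auto.
Qed.

Lemma dress_b_div_a_sub1_cplx :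
  Hdiv (dress_b (Hcplx mr mi)) (Hsub (dress_a (Hcplx mr mi)) H1) =
  Hcplx (- 2 * mi / m) ((1 - n) / m).
Proof.
  pose proof mu_norm2_neq0; pose proof one_sub_mu_norm2_neq0.
  assert (E : ((mr + mr / n) / 2 - 1) ^ 2 + ((mi - mi / n) / 2) ^ 2 = m ^ 2 / (4 * n)).
  { unfold m, n in *; field; auto. }
  rewrite dress_a_sub1_cplx, dress_b_cplx, Hdiv_cplx, E.
  f_equal; unfold m, n in *; field; auto.
Qed.

Lemma monodromy_factor_cplx :
  let mu := Hcplx mr mi in
  Hdiv (Hsub (Hconj mu) H1) (Hmul (Hconj mu) (Hsub H1 mu)) =
  Hcplx ((2 * n - n * mr - mr) / (n * m)) (mi * (n - 1) / (n * m)).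
Proof.
  pose proof mu_norm2_neq0; pose proof one_sub_mu_norm2_neq0; cbv zeta; Csimpl.
  replace (_ ^ 2 + _ ^ 2) with (n * m) by (unfold n, m; ring).
  f_equal; unfold m, n in *; field; auto.
Qed.

Lemma dress_cplx x y :
  let mu := Hcplx mr mi in
  let w := Hdiv (Hsub (Hconj mu) H1) (Hmul (Hconj mu) (Hsub H1 mu)) in
  let u := (1 + n) / 2 * q2 x - (1 - n) / 2 * q3 y in
  let v := (1 + n) / 2 * q3 x + (1 - n) / 2 * q2 y in
  dress mu x y = mkH (q0 x) (q1 x) (q0 w * u - q1 w * v) (q1 w * u + q0 w * v).
Proof.
  pose proof mu_norm2_neq0; pose proof one_sub_mu_norm2_neq0.
  cbv zeta; rewrite monodromy_factor_cplx; unfold dress; cbv zeta.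
  rewrite dress_b_div_a_sub1_cplx, dress_a_sub1_cplx, dress_b_cplx.
  destruct x as [x0 x1 x2 x3], y as [y0 y1 y2 y3]; unfold Hcplx, Hhalf, Hreal; Hsimpl; cbn [q0 q1 q2 q3].
  apply mkH_eq; unfold m, n in *; field; auto.
Qed.

End ComplexParameter.

Lemma exp_neg_ln_sqrt_cosh_sinh n s :
  0 < n -> s = - ln (sqrt n) ->
  exp s * ((1 + n) / 2) = cosh s /\ exp s * ((1 - n) / 2) = sinh s.
Proof.
  intros Hn ->.
  assert (Hr : 0 < sqrt n) by (apply sqrt_lt_R0; lra).
  assert (Hrr : sqrt n * sqrt n = n) by (apply sqrt_sqrt; lra).
  unfold cosh, sinh; rewrite Ropp_involutive, exp_Ropp, exp_ln by lra.
  set (r := sqrt n) in *; clearbody r; subst n; split; field; lra.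
Qed.

Lemma rotation_eq0 t a b :
  cos t * a - sin t * b = 0 -> sin t * a + cos t * b = 0 -> a = 0 /\ b = 0.
Proof.
  intros Ha Hb; pose proof (sin2_cos2 t) as E; unfold Rsqr in E.
  assert (Ea : a = cos t * (cos t * a - sin t * b) + sin t * (sin t * a + cos t * b))
    by (rewrite <- (Rmult_1_r a) at 1; rewrite <- E; ring).
  assert (Eb : b = cos t * (sin t * a + cos t * b) - sin t * (cos t * a - sin t * b))
    by (rewrite <- (Rmult_1_r b) at 1; rewrite <- E; ring).
  rewrite Ha, Hb in Ea, Eb; split; lra.
Qed.

Lemma cosh_pos s : 0 < cosh s.
Proof. unfold cosh; pose proof (exp_pos s); pose proof (exp_pos (- s)); lra. Qed.

Lemma cosh_sinh_comb_eq0 a b s : a * cosh s - b * sinh s = 0 <-> a = b * tanh s.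
Proof.
  pose proof (cosh_pos s); unfold tanh; split; intro E.
  - apply (Rmult_eq_reg_r (cosh s)); [field_simplify; lra | lra].
  - rewrite E; field; lra.
Qed.

Lemma Hadd_eq_l x c : Hadd x c = x <-> c = mkH 0 0 0 0.
Proof.
  destruct x as [x0 x1 x2 x3], c as [c0 c1 c2 c3]; rewrite Hadd_mkH; split.
  - intro E; injection E; intros; apply mkH_eq; lra.
  - intro E; injection E; intros -> -> -> ->; apply mkH_eq; ring.
Qed.

Theorem mainTheorem15
  (X : Type) (x0 : X)              (* the universal cover \tilde M, nonempty *)
  (gamma : X -> X)                  (* deck transformation gamma *)
  (f fs : X -> H)                   (* f and its conjugate surface f^* *)
  (tau taus : H)
  (Hf : forall p, f (gamma p) = Hadd (f p) tau)
  (Hfs : forall p, fs (gamma p) = Hadd (fs p) taus)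
  (mr mi : R)                       (* mu = mr + i mi *)
  (Hmu0 : (mr, mi) <> (0, 0)) (Hmu1 : (mr, mi) <> (1, 0))
  (s t : R)
  (Hs : s = - ln (sqrt (mr ^ 2 + mi ^ 2)))
  (Ht : let mu := Hcplx mr mi in
        let w := Hdiv (Hsub (Hconj mu) H1) (Hmul (Hconj mu) (Hsub H1 mu)) in
        exp s * cos t = q0 w /\ exp s * sin t = q1 w) :
  let mu := Hcplx mr mi in
  let fmu := fun p => dress mu (f p) (fs p) in
  let A := q2 tau * cosh s - q3 taus * sinh s in
  let B := q3 tau * cosh s + q2 taus * sinh s in
  let taumu := mkH (q0 tau) (q1 tau) (cos t * A - sin t * B) (sin t * A + cos t * B) in
  (forall p, fmu (gamma p) = Hadd (fmu p) taumu) /\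
  ((forall p, fmu (gamma p) = fmu p) <->
   (q0 tau = 0 /\ q1 tau = 0 /\
    q2 tau = q3 taus * tanh s /\ q3 tau = - q2 taus * tanh s)).
Proof.
  intros mu fmu A B taumu; cbv zeta in Ht; destruct Ht as [Hcos Hsin].
  destruct (exp_neg_ln_sqrt_cosh_sinh _ s (sum_sq_gt0 mr mi Hmu0) Hs) as [Hch Hsh].
  assert (Hdress : dress mu tau taus = taumu).
  { unfold mu; rewrite dress_cplx by assumption; rewrite <- Hcos, <- Hsin.
    unfold taumu, A, B; rewrite <- Hch, <- Hsh; apply mkH_eq; ring. }
  assert (Hperiod : forall p, fmu (gamma p) = Hadd (fmu p) taumu).
  { intro p; unfold fmu; rewrite Hf, Hfs, dress_add, Hdress; reflexivity. }
  split; [exact Hperiod |].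
  transitivity (taumu = mkH 0 0 0 0).
  { split.
    - intro Hfix; apply (Hadd_eq_l (fmu x0)); rewrite <- Hperiod; apply Hfix.
    - intros Hzero p; rewrite Hperiod; apply Hadd_eq_l, Hzero. }
  rewrite <- (cosh_sinh_comb_eq0 (q2 tau)), <- (cosh_sinh_comb_eq0 (q3 tau)).
  replace (q3 tau * cosh s - - q2 taus * sinh s) with B by (unfold B; ring).
  unfold taumu; split.
  - intro E; injection E as E0 E1 E2 E3.
    destruct (rotation_eq0 t A B E2 E3); auto.
  - intros (E0 & E1 & EA & EB); fold A in EA; rewrite E0, E1, EA, EB.
    apply mkH_eq; ring.
Qed.
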